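(* Let $q$ be odd with characteristic $p$, and let $n\ge 2$. The number $K(n,q)$ of vectors $x \in \mathbb{F}_q^n$ with $(x,x) = 0$ and $(x,\mathbf{1}) \neq 0$ is \[ K(n,q) = \begin{cases} q^{n-2}(q-1), & p \mid n,\\ q^{n-2}(q-1) - \chi((-1)^{(n-1)/2}n)(q-1)q^{(n-3)/2}, & p\nmid n,\ n\text{ odd},\\ q^{n-2}(q-1) + \chi((-1)^{n/2})(q-1)q^{(n-2)/2}, & p\nmid n,\ n \text{ even}.\end{cases} \]
   Context: $(x,y) = \sum_i x_iy_i$ is the standard inner product, $\mathbf{1}$ the all-ones vector, and $\chi$ the quadratic character of $\mathbb{F}_q$ ($\chi(a)=1$ for nonzero squares, $-1$ for nonsquares, $\chi(0)=0$); $n$ is viewed as an element of $\mathbb{F}_q$ inside $\chi$. *)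

From HB Require Import structures.
From mathcomp Require Import all_boot all_order all_algebra all_field.
Set Implicit Arguments. Unset Strict Implicit. Unset Printing Implicit Defensive.
Import Order.TTheory GRing.Theory Num.Theory.
Local Open Scope ring_scope.

Definition dotv (F : finFieldType) (n : nat) (x y : 'rV[F]_n) : F :=
  \sum_(i < n) x 0 i * y 0 i.

Definition ones (F : finFieldType) (n : nat) : 'rV[F]_n := const_mx 1.

Definition qchi (F : finFieldType) (a : F) : int :=
  if a == 0 then 0
  else if [exists b : F, b ^+ 2 == a] then 1 else -1.

Definition Kcount (F : finFieldType) (n : nat) : nat :=
  #|[set x : 'rV[F]_n | (dotv x x == 0) && (dotv x (ones F n) != 0)]|.

From HB Require Import structures.
From mathcomp Require Import all_boot all_order all_algebra all_field.
From mathcomp Require Import all_fingroup all_solvable.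
From mathcomp Require Import ring zify.
Import Order.TTheory GRing.Theory Num.Theory.
Set Implicit Arguments. Unset Strict Implicit. Unset Printing Implicit Defensive.
Local Open Scope ring_scope.

(* Write [q = #|F|], [e = qchi (-1)] and [N_m(c)] for the number of [x] in [F^m] with
   [(x, x) = c]. Splitting [F^(m+2) = F^2 x F^m] and evaluating the Jacobi sum gives
   [N_(m+2)(c) = (q - e) q^m + e q N_m(c)], hence closed forms for [N_m].
   Now [K(n) = N_n(0) - A(n)], where [A(n)] counts the isotropic [x] with [(x, 1) = 0].
   If [p | n], translating [x] by [t 1] replaces [(x, x)] by [(x, x) + 2 t (x, 1)] and
   fixes [(x, 1)]; summing over [t] gives [q K(n) = #{x | (x, 1) != 0}].
   Otherwise [x = y + r 1] with [(y, 1) = 0] has [(x, x) = (y, y) + n r^2], and since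
   [s^2 - r^2 = d] has [q - 1 + q [d = 0]] solutions,
   [sum_s N_n(n s^2) = (q - 1) q^(n-1) + q A(n)]; this determines [A(n)]. *)

Lemma odd_card_two_neq0 (F : finFieldType) : odd #|F| -> (2 : F) != 0.
Proof.
move=> oddF; apply/negP => /eqP two0.
have pchar2 : 2%N \in [pchar F] by rewrite inE /= two0 eqxx.
have /abelem_pgroup/card_pgroup := fin_ring_pchar_abelem pchar2.
rewrite cardsT => cardF; move: oddF; rewrite cardF.
case E: (logn 2 #|F|) => [|k]; last by rewrite expnS oddM.
by have := finNzRing_gt1 F; rewrite cardF E.
Qed.

Section IndicatorSums.

Variable R : nzRingType.

Lemma sumr_const_card (T : finType) (c : R) : \sum_(t : T) c = #|T|%:R * c.
Proof. by rewrite sumr_const mulr_natl. Qed.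

Lemma sum_indicator_mull (T : finType) (x : T) (f : T -> R) :
  \sum_(t : T) ((t == x)%:R * f t) = f x.
Proof.
by rewrite (bigD1 x) //= eqxx mul1r big1 ?addr0 // => t /negbTE ->; rewrite mul0r.
Qed.

Lemma sum_eq_indicator (T : finType) (x : T) : \sum_(t : T) ((t == x)%:R : R) = 1.
Proof. by rewrite (bigD1 x) //= eqxx big1 ?addr0 // => t /negbTE ->. Qed.

Lemma sum_fiber (T U : finType) (g : T -> U) (f : U -> R) :
  \sum_(x : T) f (g x) = \sum_(u : U) (\sum_(x : T) (g x == u)%:R) * f u.
Proof.
under [RHS]eq_bigr do rewrite mulr_suml.
rewrite exchange_big /=; apply: eq_bigr => x _.
by rewrite -(sum_indicator_mull (g x)); apply: eq_bigr => u _; rewrite eq_sym.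
Qed.

End IndicatorSums.

Arguments sum_eq_indicator {R T} x.

Section QuadraticCharacter.

Variable F : finFieldType.
Hypothesis two_neq0 : (2 : F) != 0.

Lemma qchi0 : qchi (0 : F) = 0.
Proof. by rewrite /qchi eqxx. Qed.

Lemma qchi1 : qchi (1 : F) = 1.
Proof.
by rewrite /qchi oner_eq0; case: existsP => // [[]]; exists 1; rewrite expr1n.
Qed.

Lemma qchi_sqrM (a b : F) : b != 0 -> qchi (b ^+ 2 * a) = qchi a.
Proof.
move=> b0; rewrite /qchi mulf_eq0 expf_eq0 /= (negbTE b0) /=.
case: (a == 0) => //; congr (if _ then _ else _); apply/existsP/existsP => -[c /eqP c2].
  exists (c / b); rewrite expr_div_n c2 mulrC mulrA mulVf ?mul1r //.
  by rewrite expf_neq0.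
by exists (b * c); rewrite exprMn c2.
Qed.

Lemma qchi_eq1 (a : F) : qchi a = 1 -> exists2 s, s != 0 & a = s ^+ 2.
Proof.
rewrite /qchi; case: eqP => // a0; case: ifP => // /existsP [s /eqP s2] _.
by exists s => //; apply/eqP => s0; apply: a0; rewrite -s2 s0 expr0n.
Qed.

Lemma qchi_neq0 (a : F) : a != 0 -> qchi a = 1 \/ qchi a = -1.
Proof. by rewrite /qchi => /negbTE ->; case: ifP; [left | right]. Qed.

Lemma qchi_le1 (a : F) : qchi a <= 1.
Proof. by rewrite /qchi; case: ifP => //; case: ifP. Qed.

Lemma card_sqrt (a : F) : \sum_(t : F) ((t ^+ 2 == a)%:R : int) = 1 + qchi a.
Proof.
have [->|a0] := eqVneq a 0.
  rewrite qchi0 addr0 -[RHS](sum_eq_indicator (0 : F)).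
  by apply: eq_bigr => t _; rewrite sqrf_eq0.
rewrite /qchi (negbTE a0); case: ifP => [/existsP [b /eqP b2] | nsq]; last first.
  rewrite big1 ?subrr // => t _; case: eqP => // t2.
  by move: nsq; rewrite -t2 (existsb t).
have b0 : b != 0 by apply: contraNneq a0 => b0; rewrite -b2 b0 expr0n.
have bNb : b != - b.
  by rewrite -subr_eq0 opprK -mulr2n -mulr_natl mulf_neq0.
transitivity (\sum_(t : F) ((t == b)%:R + (t == - b)%:R : int)).
  apply: eq_bigr => t _; rewrite -b2 eqf_sqr.
  by have [->|] := eqVneq t b; rewrite ?(negbTE bNb) ?add0r.
by rewrite big_split /= !sum_eq_indicator.
Qed.

Lemma sum_qchi : \sum_(a : F) qchi a = 0.
Proof.
have : \sum_(a : F) (1 + qchi a) = \sum_(a : F) 1.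
  under eq_bigr do rewrite -card_sqrt.
  rewrite exchange_big /=; apply: eq_bigr => t _.
  by rewrite -[RHS](sum_eq_indicator (t ^+ 2)); apply: eq_bigr => a _; rewrite eq_sym.
by rewrite big_split /= -[RHS]addr0 => /addrI.
Qed.

(* For a nonsquare [a] the terms [- (qchi y + qchi (a * y))] are nonnegative and sum
   to [0], so they all vanish: [a] times any nonsquare is a square. *)
Lemma qchiM (a b : F) : qchi (a * b) = qchi a * qchi b.
Proof.
have [->|a0] := eqVneq a 0; first by rewrite mul0r !qchi0 mul0r.
have [->|b0] := eqVneq b 0; first by rewrite mulr0 !qchi0 mulr0.
have [qa1|qaN1] := qchi_neq0 a0.
  by rewrite qa1 mul1r; have [s s0 ->] := qchi_eq1 qa1; rewrite qchi_sqrM.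
have [qb1|qbN1] := qchi_neq0 b0.
  by rewrite qb1 mulr1; have [s s0 ->] := qchi_eq1 qb1; rewrite mulrC qchi_sqrM.
have sum0 : \sum_(y : F) - (qchi y + qchi (a * y)) = 0.
  have shift : \sum_(y : F) qchi (a * y) = \sum_(y : F) qchi y.
    by rewrite [RHS](reindex_inj (mulfI a0)).
  by rewrite sumrN big_split /= shift sum_qchi addr0 oppr0.
have term_ge0 (y : F) : true -> 0 <= - (qchi y + qchi (a * y)).
  move=> _; have [->|y0] := eqVneq y 0; first by rewrite mulr0 qchi0 oppr0.
  have [qy1|->] := qchi_neq0 y0; last by rewrite opprD opprK subr_ge0 qchi_le1.
  rewrite qy1; have [s s0 ->] := qchi_eq1 qy1.
  by rewrite mulrC qchi_sqrM // qaN1 subrr oppr0.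
have /eqP := psumr_eq0P term_ge0 sum0 (i := b) isT.
by rewrite oppr_eq0 addr_eq0 qaN1 qbN1 mulrNN mulr1 => /eqP /oppr_inj <-.
Qed.

Lemma qchiX (a : F) (k : nat) : qchi (a ^+ k) = qchi a ^+ k.
Proof. by elim: k => [|k IHk]; rewrite ?qchi1 // !exprS qchiM IHk. Qed.

Lemma sum_qchi_Msqr (N : F) :
  \sum_(s : F) qchi (N * s ^+ 2) = (#|F|%:R - 1) * qchi N.
Proof.
transitivity (\sum_(s : F) (qchi N - (s == 0)%:R * qchi N)).
  apply: eq_bigr => s _; have [->|s0] := eqVneq s 0.
    by rewrite expr0n mulr0 qchi0 mul1r subrr.
  by rewrite mul0r subr0 mulrC qchi_sqrM.
by rewrite sumrB -mulr_suml sum_eq_indicator sumr_const_card mul1r mulrBl mul1r.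
Qed.

Lemma sum_qchi_subr (c : F) : \sum_(u : F) qchi (c - u) = 0.
Proof. by rewrite -[RHS]sum_qchi [RHS](reindex_inj (subrI c)). Qed.

Lemma jacobi_sum (c : F) :
  \sum_(u : F) qchi u * qchi (c - u) =
  if c == 0 then (#|F|%:R - 1) * qchi (-1 : F) else - qchi (-1 : F).
Proof.
have [->|c0] := eqVneq c 0.
  rewrite -(sum_qchi_Msqr (-1)); apply: eq_bigr => u _.
  by rewrite -qchiM sub0r mulrN mulN1r -expr2.
(* The correction term cancels the junk value [qchi (c / 0 - 1) = qchi (-1)]. *)
transitivity (\sum_(u : F) (qchi (c / u - 1) - (u == 0)%:R * qchi (-1 : F))).
  apply: eq_bigr => u _; have [->|u0] := eqVneq u 0.
    by rewrite qchi0 mul0r invr0 mulr0 sub0r mul1r subrr.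
  by rewrite mul0r subr0 -qchiM -[RHS](qchi_sqrM _ u0); congr qchi; field.
rewrite sumrB -mulr_suml sum_eq_indicator mul1r.
have inj : injective (fun u : F => c / u - 1).
  by move=> x y /addIr /(mulfI c0) /invr_inj.
have shift : \sum_(u : F) qchi (c / u - 1) = \sum_(u : F) qchi u.
  by rewrite [RHS](reindex_inj inj).
by rewrite shift sum_qchi sub0r.
Qed.

End QuadraticCharacter.

Section RowVectors.

Variable F : finFieldType.

Lemma sum_row_mx (V : nmodType) (m1 m2 : nat) (f : 'rV[F]_(m1 + m2) -> V) :
  \sum_(x : 'rV[F]_(m1 + m2)) f x =
  \sum_(x1 : 'rV[F]_m1) \sum_(x2 : 'rV[F]_m2) f (row_mx x1 x2).
Proof.
rewrite pair_big /= (reindex (fun p : 'rV[F]_m1 * 'rV[F]_m2 => row_mx p.1 p.2)) //=.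
apply: onW_bij; exists (fun x => (lsubmx x, rsubmx x)) => [[x1 x2] | x] /=.
  by rewrite row_mxKl row_mxKr.
exact: hsubmxK.
Qed.

Lemma sum_rV1 (V : nmodType) (f : 'rV[F]_1 -> V) :
  \sum_(x : 'rV[F]_1) f x = \sum_(t : F) f (const_mx t).
Proof.
rewrite (reindex (fun t : F => const_mx t)) //.
apply: onW_bij; exists (fun x : 'rV[F]_1 => x 0 0) => [t | x]; first by rewrite mxE.
by apply/matrixP => i j; rewrite !ord1 mxE.
Qed.

Lemma dotv_row_mx (m1 m2 : nat) (x1 y1 : 'rV[F]_m1) (x2 y2 : 'rV[F]_m2) :
  dotv (row_mx x1 x2) (row_mx y1 y2) = dotv x1 y1 + dotv x2 y2.
Proof.
rewrite /dotv big_split_ord /=.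
by congr (_ + _); apply: eq_bigr => i _; rewrite ?row_mxEl ?row_mxEr.
Qed.

Lemma dotv_const_mx1 (s t : F) : dotv (const_mx s : 'rV[F]_1) (const_mx t) = s * t.
Proof. by rewrite /dotv big_ord1 !mxE. Qed.

Lemma dotv_onesE (n : nat) (x : 'rV[F]_n) : dotv x (ones F n) = \sum_(i < n) x 0 i.
Proof. by apply: eq_bigr => i _; rewrite mxE mulr1. Qed.

Lemma dotv_ones_add_const (n : nat) (x : 'rV[F]_n) (t : F) :
  dotv (x + const_mx t) (ones F n) = dotv x (ones F n) + t *+ n.
Proof.
rewrite !dotv_onesE; transitivity (\sum_(i < n) (x 0 i + t)).
  by apply: eq_bigr => i _; rewrite !mxE.
by rewrite big_split /= sumr_const card_ord.
Qed.

Lemma dotv_add_const (n : nat) (x : 'rV[F]_n) (t : F) :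
  dotv (x + const_mx t) (x + const_mx t) =
  dotv x x + (t * dotv x (ones F n)) *+ 2 + t ^+ 2 *+ n.
Proof.
rewrite dotv_onesE /dotv.
transitivity (\sum_(i < n) (x 0 i * x 0 i + (t * x 0 i) *+ 2 + t ^+ 2)).
  by apply: eq_bigr => i _; rewrite !mxE; ring.
by rewrite !big_split /= sumr_const card_ord mulr_sumr mulr2n.
Qed.

End RowVectors.

Definition Nsum_sq (F : finFieldType) (m : nat) (c : F) : int :=
  \sum_(x : 'rV[F]_m) ((dotv x x == c)%:R : int).

Section SumsOfSquares.

Variable F : finFieldType.
Hypothesis two_neq0 : (2 : F) != 0.
Local Notation q := (#|F|%:R : int).

Lemma sum_rV_const1 (m : nat) : \sum_(x : 'rV[F]_m) (1 : int) = q ^+ m.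
Proof. by rewrite sumr_const_card card_mx mul1n natrX mulr1. Qed.

Lemma Nsum_sq_add (m1 m2 : nat) (c : F) :
  Nsum_sq (m1 + m2) c = \sum_(v : F) Nsum_sq m1 v * Nsum_sq m2 (c - v).
Proof.
rewrite [LHS]sum_row_mx.
transitivity (\sum_(x1 : 'rV[F]_m1) Nsum_sq m2 (c - dotv x1 x1)).
  apply: eq_bigr => x1 _; apply: eq_bigr => x2 _.
  by rewrite dotv_row_mx [in RHS]eq_sym subr_eq [in RHS]eq_sym addrC.
exact: (sum_fiber (fun x1 : 'rV[F]_m1 => dotv x1 x1) (fun v => Nsum_sq m2 (c - v))).
Qed.

Lemma sum_Nsum_sq (m : nat) : \sum_(v : F) Nsum_sq m v = q ^+ m.
Proof.
rewrite -sum_rV_const1 (sum_fiber (fun x : 'rV[F]_m => dotv x x) (fun _ => 1)).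
by apply: eq_bigr => v _; rewrite mulr1.
Qed.

Lemma Nsum_sq1 (c : F) : Nsum_sq 1 c = 1 + qchi c.
Proof.
rewrite /Nsum_sq sum_rV1 -card_sqrt //.
by apply: eq_bigr => t _; rewrite dotv_const_mx1 expr2.
Qed.

Lemma Nsum_sq2 (c : F) :
  Nsum_sq 2 c = q - qchi (-1 : F) + qchi (-1 : F) * q * (c == 0)%:R.
Proof.
rewrite (Nsum_sq_add 1 1).
transitivity (\sum_(v : F) (1 + qchi v + qchi (c - v) + qchi v * qchi (c - v))).
  by apply: eq_bigr => v _; rewrite !Nsum_sq1; ring.
rewrite !big_split /= sumr_const_card sum_qchi // sum_qchi_subr // jacobi_sum //.
by have [_|_] := eqVneq c 0; rewrite ?mulr1 ?mulr0; ring.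
Qed.

Lemma Nsum_sq_addn2 (m : nat) (c : F) :
  Nsum_sq m.+2 c = (q - qchi (-1 : F)) * q ^+ m + qchi (-1 : F) * q * Nsum_sq m c.
Proof.
rewrite (Nsum_sq_add 2 m).
transitivity (\sum_(v : F) ((q - qchi (-1 : F)) * Nsum_sq m (c - v)
    + qchi (-1 : F) * q * ((v == 0)%:R * Nsum_sq m (c - v)))).
  by apply: eq_bigr => v _; rewrite Nsum_sq2; ring.
have shift : \sum_(v : F) Nsum_sq m (c - v) = \sum_(v : F) Nsum_sq m v.
  by rewrite [RHS](reindex_inj (subrI c)).
by rewrite big_split /= -!mulr_sumr shift sum_Nsum_sq sum_indicator_mull subr0.
Qed.

Lemma Nsum_sq_odd (k : nat) (c : F) :
  Nsum_sq k.*2.+1 c = q ^+ k.*2 + q ^+ k * qchi (-1 : F) ^+ k * qchi c.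
Proof.
elim: k c => [|k IHk] c; first by rewrite Nsum_sq1 !expr0 !mul1r.
by rewrite doubleS Nsum_sq_addn2 IHk !exprS; ring.
Qed.

Lemma Nsum_sq_even (k : nat) (c : F) :
  Nsum_sq k.*2.+2 c =
  q ^+ k.*2.+1 + q ^+ k * qchi (-1 : F) ^+ k.+1 * (q * (c == 0)%:R - 1).
Proof.
elim: k c => [|k IHk] c; first by rewrite Nsum_sq2 !expr0 !expr1 mul1r; ring.
by rewrite doubleS Nsum_sq_addn2 IHk !exprS; ring.
Qed.

End SumsOfSquares.

Definition Niso_perp (F : finFieldType) (n : nat) : int :=
  \sum_(y : 'rV[F]_n) (((dotv y y == 0) && (dotv y (ones F n) == 0))%:R : int).

Section IsotropicCount.

Variable F : finFieldType.
Hypothesis two_neq0 : (2 : F) != 0.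
Local Notation q := (#|F|%:R : int).

Lemma natr_card_neq0 : q != 0.
Proof. by rewrite pnatr_eq0 -lt0n; apply/card_gt0P; exists 0. Qed.

Lemma sum_affine_eq0 (b a : F) : a != 0 -> \sum_(t : F) ((b + t * a == 0)%:R : int) = 1.
Proof.
move=> a0; rewrite -[RHS](sum_eq_indicator (- b / a)); apply: eq_bigr => t _.
by rewrite addrC addr_eq0 -[in RHS](inj_eq (mulIf a0)) divfK.
Qed.

Lemma sum_dotv_ones_eq (m : nat) (b : F) :
  \sum_(x : 'rV[F]_m.+1) ((dotv x (ones F m.+1) == b)%:R : int) = q ^+ m.
Proof.
rewrite [LHS](@sum_row_mx F _ 1 m) -sum_rV_const1 exchange_big /=.
apply: eq_bigr => y _; rewrite sum_rV1 -[RHS](sum_eq_indicator (b - dotv y (ones F m))).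
apply: eq_bigr => t _; rewrite /ones -(@row_mx_const F 1 1 m 1) (@dotv_row_mx F 1 m).
by rewrite dotv_const_mx1 mulr1 -[in RHS](inj_eq (addIr (dotv y (const_mx 1)))) subrK.
Qed.

Lemma sum_dotv_ones_neq0 (m : nat) :
  \sum_(x : 'rV[F]_m.+1) ((dotv x (ones F m.+1) != 0)%:R : int) = q ^+ m.+1 - q ^+ m.
Proof.
transitivity (\sum_(x : 'rV[F]_m.+1) (1 - (dotv x (ones F m.+1) == 0)%:R : int)).
  by apply: eq_bigr => x _; case: eqP.
by rewrite sumrB sum_rV_const1 sum_dotv_ones_eq.
Qed.

Lemma Kcount_sum (n : nat) : (Kcount F n)%:Z =
  \sum_(x : 'rV[F]_n) (((dotv x x == 0) && (dotv x (ones F n) != 0))%:R : int).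
Proof.
rewrite /Kcount -sum1_card -natz natr_sum big_mkcond /=.
by apply: eq_bigr => x _; rewrite inE; case: (_ && _).
Qed.

Lemma Kcount_split (n : nat) : (Kcount F n)%:Z = Nsum_sq n (0 : F) - Niso_perp F n.
Proof.
rewrite Kcount_sum /Nsum_sq /Niso_perp -sumrB; apply: eq_bigr => x _.
by case: (dotv x x == 0); case: (dotv x (ones F n) == 0).
Qed.

Lemma Kcount_pchar_dvd (m : nat) :
  (m.+2)%:R = 0 :> F -> (Kcount F m.+2)%:Z = q ^+ m * (q - 1).
Proof.
move=> n0; apply: (mulfI natr_card_neq0).
have mulrn0 (a : F) : a *+ m.+2 = 0 by rewrite -mulr_natr n0 mulr0.
have translate (t : F) : (Kcount F m.+2)%:Z = \sum_(x : 'rV[F]_m.+2)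
    (((dotv x x + t * (dotv x (ones F m.+2) *+ 2) == 0)
      && (dotv x (ones F m.+2) != 0))%:R : int).
  rewrite Kcount_sum (reindex_inj (addIr (const_mx t))) /=; apply: eq_bigr => x _.
  by rewrite dotv_add_const dotv_ones_add_const !mulrn0 !addr0 mulrnAr.
transitivity (\sum_(t : F) (Kcount F m.+2)%:Z); first by rewrite sumr_const_card.
rewrite (eq_bigr _ (fun t _ => translate t)) exchange_big /=.
transitivity (\sum_(x : 'rV[F]_m.+2) ((dotv x (ones F m.+2) != 0)%:R : int)).
  apply: eq_bigr => x _; have [L0|L0] := eqVneq (dotv x (ones F m.+2)) 0.
    by rewrite big1 // => t _; rewrite L0 andbF.
  under eq_bigr do rewrite andbT.
  by rewrite sum_affine_eq0 // -mulr_natr mulf_neq0.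
by rewrite sum_dotv_ones_neq0 !exprS; ring.
Qed.

Lemma sum_decomp_ones (n : nat) (f : 'rV[F]_n -> int) : (n%:R : F) != 0 ->
  \sum_(x : 'rV[F]_n) f x =
  \sum_(r : F) \sum_(y : 'rV[F]_n) ((dotv y (ones F n) == 0)%:R * f (y + const_mx r)).
Proof.
move=> n0.
transitivity (\sum_(r : F) \sum_(x : 'rV[F]_n)
    ((dotv (x + const_mx (- r)) (ones F n) == 0)%:R * f x)); last first.
  apply: eq_bigr => r _; rewrite [RHS](reindex_inj (addIr (const_mx (- r)))) /=.
  have const_mxNK : const_mx (- r) + const_mx r = 0 :> 'rV[F]_n.
    by apply/matrixP => i j; rewrite !mxE addNr.
  by apply: eq_bigr => x _; rewrite -addrA const_mxNK addr0.
rewrite exchange_big /=; apply: eq_bigr => x _.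
rewrite -mulr_suml -[LHS]mul1r; congr (_ * _).
rewrite -[LHS](sum_affine_eq0 (dotv x (ones F n)) (_ : - (n%:R : F) != 0)) ?oppr_eq0 //.
by apply: eq_bigr => r _; rewrite dotv_ones_add_const mulrN mulr_natr mulNrn.
Qed.

Lemma count_mul_eq (d : F) :
  \sum_(u : F) \sum_(v : F) ((u * v == d)%:R : int) = q - 1 + q * (d == 0)%:R.
Proof.
transitivity (\sum_(u : F) ((1 - (u == 0)%:R) + (u == 0)%:R * (q * (d == 0)%:R)) : int).
  apply: eq_bigr => u _; have [->|u0] := eqVneq u 0.
    by under eq_bigr do rewrite mul0r eq_sym; rewrite sumr_const_card subrr add0r mul1r.
  rewrite subr0 mul0r addr0 -[RHS](sum_affine_eq0 (- d) u0); apply: eq_bigr => v _.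
  by rewrite mulrC addrC subr_eq0.
by rewrite big_split /= sumrB sumr_const_card -mulr_suml sum_eq_indicator mulr1 mul1r.
Qed.

Lemma count_sqr_sub_eq (d : F) :
  \sum_(s : F) \sum_(r : F) ((s ^+ 2 - r ^+ 2 == d)%:R : int) = q - 1 + q * (d == 0)%:R.
Proof.
rewrite -count_mul_eq !pair_big /=.
rewrite (reindex (fun p : F * F => ((p.1 + p.2) / 2, (p.2 - p.1) / 2))) /=; last first.
  apply: onW_bij; exists (fun p : F * F => (p.1 - p.2, p.1 + p.2)) => -[u v] /=.
    by congr pair; field.
  by congr pair; field.
apply: eq_bigr => -[u v] _ /=.
by have -> : ((u + v) / 2) ^+ 2 - ((v - u) / 2) ^+ 2 = u * v by field.
Qed.

Lemma sum_Nsum_sq_Msqr (m : nat) : (m.+1%:R : F) != 0 ->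
  \sum_(s : F) Nsum_sq m.+1 (m.+1%:R * s ^+ 2) = (q - 1) * q ^+ m + q * Niso_perp F m.+1.
Proof.
set N : F := m.+1%:R => N0.
have sqr_eq (a r s : F) : (a + N * r ^+ 2 == N * s ^+ 2) = (s ^+ 2 - r ^+ 2 == a / N).
  by rewrite -[in RHS](inj_eq (mulfI N0)) mulrBr [N * (a / N)]mulrC divfK // subr_eq eq_sym.
transitivity (\sum_(y : 'rV[F]_m.+1) ((dotv y (ones F m.+1) == 0)%:R *
    \sum_(s : F) \sum_(r : F) ((s ^+ 2 - r ^+ 2 == dotv y y / N)%:R : int))).
  under eq_bigr => s _ do rewrite /Nsum_sq (sum_decomp_ones _ N0) exchange_big.
  rewrite exchange_big /=; apply: eq_bigr => y _; rewrite mulr_sumr.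
  apply: eq_bigr => s _; rewrite mulr_sumr; apply: eq_bigr => r _.
  have [L0|] := eqVneq (dotv y (ones F m.+1)) 0; last by rewrite !mul0r.
  by rewrite dotv_add_const L0 mulr0 mul0rn addr0 -[r ^+ 2 *+ _]mulr_natl sqr_eq.
transitivity (\sum_(y : 'rV[F]_m.+1) ((q - 1) * (dotv y (ones F m.+1) == 0)%:R
    + q * ((dotv y y == 0) && (dotv y (ones F m.+1) == 0))%:R)).
  apply: eq_bigr => y _; rewrite count_sqr_sub_eq mulf_eq0 invr_eq0 (negbTE N0) orbF.
  by case: (dotv y (ones F m.+1) == 0); case: (dotv y y == 0) => /=; ring.
by rewrite big_split /= -!mulr_sumr sum_dotv_ones_eq.
Qed.

Lemma Kcount_odd (k : nat) : ((k.*2.+3)%:R : F) != 0 ->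
  (Kcount F k.*2.+3)%:Z = q ^+ k.*2.+1 * (q - 1)
    - qchi ((-1) ^+ k.+1 * (k.*2.+3)%:R : F) * (q - 1) * q ^+ k.
Proof.
move=> N0; apply: (mulfI natr_card_neq0).
have Nsum_sq_k := Nsum_sq_odd two_neq0 k.+1; rewrite doubleS in Nsum_sq_k.
have q_Niso_perp : q * Niso_perp F k.*2.+3 =
    \sum_(s : F) Nsum_sq k.*2.+3 ((k.*2.+3)%:R * s ^+ 2) - (q - 1) * q ^+ k.*2.+2.
  by rewrite sum_Nsum_sq_Msqr //; ring.
rewrite Kcount_split mulrBr q_Niso_perp Nsum_sq_k qchi0 mulr0 addr0.
under eq_bigr do rewrite Nsum_sq_k.
rewrite big_split /= sumr_const_card -mulr_sumr sum_qchi_Msqr qchiM // qchiX //.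
by rewrite !exprS; ring.
Qed.

Lemma Kcount_even (k : nat) : ((k.*2.+2)%:R : F) != 0 ->
  (Kcount F k.*2.+2)%:Z = q ^+ k.*2 * (q - 1)
    + qchi ((-1) ^+ k.+1 : F) * (q - 1) * q ^+ k.
Proof.
move=> N0; apply: (mulfI natr_card_neq0).
have Nsum_sq_k := Nsum_sq_even two_neq0 k.
have q_Niso_perp : q * Niso_perp F k.*2.+2 =
    \sum_(s : F) Nsum_sq k.*2.+2 ((k.*2.+2)%:R * s ^+ 2) - (q - 1) * q ^+ k.*2.+1.
  by rewrite sum_Nsum_sq_Msqr //; ring.
have Msqr_eq0 : \sum_(s : F) (((k.*2.+2)%:R * s ^+ 2 == 0 :> F)%:R : int) = 1.
  rewrite -[RHS](sum_eq_indicator (0 : F)); apply: eq_bigr => s _.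
  by rewrite mulf_eq0 (negbTE N0) sqrf_eq0.
rewrite Kcount_split mulrBr q_Niso_perp Nsum_sq_k eqxx mulr1.
under eq_bigr do rewrite Nsum_sq_k.
rewrite big_split /= sumr_const_card -mulr_sumr sumrB -mulr_sumr Msqr_eq0.
rewrite sumr_const_card qchiX //.
by rewrite !exprS; ring.
Qed.

End IsotropicCount.

Theorem mainTheorem8 (F : finFieldType) (p n : nat)
  (hodd : odd #|F|) (hp : p \in [pchar F]) (hn : (2 <= n)%N) :
  (Kcount F n)%:Z =
  (if (p %| n)%N then (#|F|%:Z) ^+ (n - 2) * (#|F|%:Z - 1)
   else if odd n then
     (#|F|%:Z) ^+ (n - 2) * (#|F|%:Z - 1)
     - qchi ((-1) ^+ ((n - 1) %/ 2) * n%:R : F) * (#|F|%:Z - 1)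
       * (#|F|%:Z) ^+ ((n - 3) %/ 2)
   else
     (#|F|%:Z) ^+ (n - 2) * (#|F|%:Z - 1)
     + qchi ((-1) ^+ (n %/ 2) : F) * (#|F|%:Z - 1)
       * (#|F|%:Z) ^+ ((n - 2) %/ 2)).
Proof.
have two_neq0 := odd_card_two_neq0 hodd.
rewrite -(natz #|F|); case: n hn => [|[|m]] // _.
have [p_dvd|p_ndvd] := ifP.
  by rewrite Kcount_pchar_dvd ?subn2 //; apply/eqP; rewrite -(dvdn_pcharf hp).
have n_neq0 : (m.+2)%:R != 0 :> F by rewrite -(dvdn_pcharf hp) p_ndvd.
have [[k mE]|[k mE]] : {k | m = k.*2.+1} + {k | m = k.*2}.
  case: (boolP (odd m)) => om; [left | right]; exists m./2;
    by rewrite -[LHS]odd_double_half ?om ?(negbTE om).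
- rewrite mE in n_neq0 *; rewrite (Kcount_odd two_neq0 n_neq0) /= negbK odd_double /=.
  by congr (_ ^+ _ * _ - qchi ((-1) ^+ _ * _) * _ * _ ^+ _); lia.
- rewrite mE in n_neq0 *; rewrite (Kcount_even two_neq0 n_neq0) /= negbK odd_double.
  by congr (_ ^+ _ * _ + qchi ((-1) ^+ _) * _ * _ ^+ _); lia.
Qed.
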